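(* Assume exactness and $\mathbf{A}\neq 0$. Let $x^0\in\mathbb{R}^n$, $y^0=0\in\mathbb{R}^m$, and let $\{y^k\}$ be generated by stochastic dual subspace ascent $$y^{k+1}=y^k+\omega\mathbf{S}_k\lambda^k,\qquad \lambda^k=(\mathbf{S}_k^\top\mathbf{A}\mathbf{B}^{-1}\mathbf{A}^\top\mathbf{S}_k)^\dagger\mathbf{S}_k^\top\big(b-\mathbf{A}(x^0+\mathbf{B}^{-1}\mathbf{A}^\top y^k)\big),$$ with $0<\omega<2$. Let $y^*$ be any maximizer of $D$. Then for all $k\ge0$ $$\mathbb{E}[D(y^* )-D(y^k)]\le\big[1-\omega(2-\omega)\lambda_{\min}^+\big]^k\big(D(y^* )-D(y^0)\big).$$
   Context: Let $\mathbf{A}\in\mathbb{R}^{m\times n}$ and $b\in\mathbb{R}^m$ be such that the linear system $\mathbf{A}x=b$ is consistent. Let $\mathbf{B}\in\mathbb{R}^{n\times n}$ be symmetric positive definite and $\|v\|_{\mathbf{B}^{-1}}^2=v^\top\mathbf{B}^{-1}v$. For the given $x^0$, the dual function is $D(y)=(b-\mathbf{A}x^0)^\top y-\tfrac12\|\mathbf{A}^\top y\|_{\mathbf{B}^{-1}}^2$, $y\in\mathbb{R}^m$ (it is bounded above and attains its maximum). Let $\mathcal{D}$ be a probability distribution over random real matrices $\mathbf{S}$ with $m$ rows (any number of columns). For $\mathbf{S}\sim\mathcal{D}$ set $\mathbf{H}=\mathbf{S}(\mathbf{S}^\top\mathbf{A}\mathbf{B}^{-1}\mathbf{A}^\top\mathbf{S})^\dagger\mathbf{S}^\top$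 ($\dagger$ denotes the Moore–Penrose pseudoinverse) and $\mathbf{Z}=\mathbf{A}^\top\mathbf{H}\mathbf{A}$; $\mathbb{E}[\mathbf{Z}]$ is assumed finite. Let $\mathbf{W}=\mathbf{B}^{-1/2}\mathbb{E}[\mathbf{Z}]\mathbf{B}^{-1/2}$ (its eigenvalues lie in $[0,1]$); $\lambda_{\min}^+$ is its smallest nonzero eigenvalue. Exactness means $\mathrm{Null}(\mathbb{E}[\mathbf{Z}])=\mathrm{Null}(\mathbf{A})$. The matrices $\mathbf{S}_k$ are drawn i.i.d. from $\mathcal{D}$. *)

From HB Require Import structures.
From mathcomp Require Import all_boot all_order all_algebra.
From mathcomp Require Import all_classical all_reals all_analysis.
Set Implicit Arguments. Unset Strict Implicit. Unset Printing Implicit Defensive.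
Import Order.TTheory GRing.Theory Num.Theory.
Local Open Scope ring_scope.
Local Open Scope classical_set_scope.

Section Defs.
Variable R : realType.

Definition penrose (p q : nat) (M : 'M[R]_(p, q)) (X : 'M[R]_(q, p)) : Prop :=
  [/\ M *m X *m M = M, X *m M *m X = X,
      (M *m X)^T = M *m X & (X *m M)^T = X *m M].

Definition mpinv (p q : nat) (M : 'M[R]_(p, q)) : 'M[R]_(q, p) :=
  xget 0 [set X | penrose M X].

Definition spd (n : nat) (B : 'M[R]_n) : Prop :=
  B^T = B /\ forall x : 'cV[R]_n, x != 0 -> 0 < (x^T *m B *m x) 0 0.

Definition spsd (n : nat) (B : 'M[R]_n) : Prop :=
  B^T = B /\ forall x : 'cV[R]_n, 0 <= (x^T *m B *m x) 0 0.

Definition mxsqrt (n : nat) (C : 'M[R]_n) : 'M[R]_n :=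
  xget 0 [set X | spsd X /\ X *m X = C].

Definition is_lambda_min_plus (n : nat) (W : 'M[R]_n) (l : R) : Prop :=
  [/\ eigenvalue W l, l != 0 &
      forall mu, eigenvalue W mu -> mu != 0 -> l <= mu].

Definition dualD (m n : nat) (A : 'M[R]_(m, n)) (B : 'M[R]_n)
  (b : 'cV[R]_m) (x0 : 'cV[R]_n) (y : 'cV[R]_m) : R :=
  ((b - A *m x0)^T *m y) 0 0
  - 2^-1 * ((A^T *m y)^T *m invmx B *m (A^T *m y)) 0 0.

Definition Hmat (m n q : nat) (A : 'M[R]_(m, n)) (B : 'M[R]_n)
  (S : 'M[R]_(m, q)) : 'M[R]_m :=
  S *m mpinv (S^T *m A *m invmx B *m A^T *m S) *m S^T.

Definition sdsa_step (m n q : nat) (A : 'M[R]_(m, n)) (B : 'M[R]_n)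
  (b : 'cV[R]_m) (x0 : 'cV[R]_n) (omega : R) (S : 'M[R]_(m, q))
  (y : 'cV[R]_m) : 'cV[R]_m :=
  let lam := mpinv (S^T *m A *m invmx B *m A^T *m S)
             *m S^T *m (b - A *m (x0 + invmx B *m A^T *m y)) in
  y + omega *: (S *m lam).

Definition sdsa_iter (d : measure_display) (T : measurableType d)
  (m n : nat) (A : 'M[R]_(m, n)) (B : 'M[R]_n)
  (b : 'cV[R]_m) (x0 : 'cV[R]_n) (omega : R)
  (S : T -> {q : nat & 'M[R]_(m, q)}) (y0 : 'cV[R]_m) (s : seq T) : 'cV[R]_m :=
  foldl (fun y t => sdsa_step A B b x0 omega (projT2 (S t)) y) y0 s.

(* Expectation over k i.i.d. draws t_0, ..., t_{k-1} ~ mu of f [:: t_0; ...; t_{k-1}]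
   (integral against the product measure mu^{(x) k}, as iterated integrals). *)
Fixpoint iid_expect (d : measure_display) (T : measurableType d)
  (mu : probability T R) (k : nat) (f : seq T -> \bar R) : \bar R :=
  match k with
  | 0 => f [::]
  | k'.+1 => (\int[mu]_t iid_expect mu k' (fun s => f (t :: s)))%E
  end.

End Defs.

From HB Require Import structures.
From mathcomp Require Import all_boot all_order all_algebra.
From mathcomp Require Import all_classical all_reals all_analysis.
From mathcomp Require Import complex ring lra.
Set Implicit Arguments. Unset Strict Implicit. Unset Printing Implicit Defensive.
Import Order.TTheory GRing.Theory Num.Theory.
Local Open Scope ring_scope.

(* Put [e := y - ystar] and [x := invmx B *m A^T *m e], the offset of the primal
   iterate [x0 + invmx B *m A^T *m y] from the primal solution.  The dual gap is
   [x^T B x / 2], and a step with sketch [S] lowers it by exactly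
   [omega (2 - omega) / 2 * x^T Z x] with [Z = A^T H A].  In expectation this is
   [x^T E[Z] x]; exactness puts [x] in the range of [invmx B *m E[Z]], where the
   spectral theorem for [W = B^-1/2 E[Z] B^-1/2] gives [x^T E[Z] x >= lam x^T B x].
   Hence every step contracts the expected gap by [1 - omega (2 - omega) lam],
   and the sketches being i.i.d., the bound iterates. *)

Section ColumnDot.
Variable R : realDomainType.

Definition cdot (k : nat) (u v : 'cV[R]_k) : R := (u^T *m v) 0 0.

Lemma cdotC k (u v : 'cV[R]_k) : cdot u v = cdot v u.
Proof. by rewrite /cdot -[v^T *m u]trmxK trmx_mul trmxK [RHS]mxE. Qed.

Lemma cdotDl k (u w v : 'cV[R]_k) : cdot (u + w) v = cdot u v + cdot w v.
Proof. by rewrite /cdot linearD /= mulmxDl mxE. Qed.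

Lemma cdotZl k a (u v : 'cV[R]_k) : cdot (a *: u) v = a * cdot u v.
Proof. by rewrite /cdot linearZ /= -scalemxAl mxE. Qed.

Lemma cdotBl k (u w v : 'cV[R]_k) : cdot (u - w) v = cdot u v - cdot w v.
Proof. by rewrite cdotDl -scaleN1r cdotZl mulN1r. Qed.

Lemma cdotDr k (u w v : 'cV[R]_k) : cdot v (u + w) = cdot v u + cdot v w.
Proof. by rewrite ![cdot v _]cdotC cdotDl. Qed.

Lemma cdotZr k a (u v : 'cV[R]_k) : cdot v (a *: u) = a * cdot v u.
Proof. by rewrite ![cdot v _]cdotC cdotZl. Qed.

Lemma cdotBr k (u w v : 'cV[R]_k) : cdot v (u - w) = cdot v u - cdot v w.
Proof. by rewrite ![cdot v _]cdotC cdotBl. Qed.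

Lemma cdot0l k (u : 'cV[R]_k) : cdot 0 u = 0.
Proof. by rewrite /cdot trmx0 mul0mx mxE. Qed.

Lemma cdot_mulmxr k l (K : 'M[R]_(k, l)) u v : cdot u (K *m v) = cdot (K^T *m u) v.
Proof. by rewrite /cdot trmx_mul trmxK mulmxA. Qed.

Lemma cdot_mulmxl k l (K : 'M[R]_(l, k)) u v : cdot (K *m u) v = cdot u (K^T *m v).
Proof. by rewrite cdot_mulmxr trmxK. Qed.

Lemma cdot_sumE k (u v : 'cV[R]_k) : cdot u v = \sum_i u i 0 * v i 0.
Proof. by rewrite /cdot mxE; apply: eq_bigr => i _; rewrite mxE. Qed.

Lemma cdot_self_ge0 k (u : 'cV[R]_k) : 0 <= cdot u u.
Proof. by rewrite cdot_sumE sumr_ge0 // => i _; rewrite -expr2 sqr_ge0. Qed.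

Lemma cdot_self_eq0 k (u : 'cV[R]_k) : (cdot u u == 0) = (u == 0).
Proof.
rewrite cdot_sumE psumr_eq0 => [|i _]; last by rewrite -expr2 sqr_ge0.
apply/allP/eqP => [u0|-> i _]; last by rewrite mxE mul0r eqxx.
apply/matrixP => i j; rewrite (ord1 j) mxE.
by have /implyP/(_ isT) := u0 i (mem_index_enum _); rewrite mulf_eq0 orbb => /eqP.
Qed.

Lemma cdot_quad_sum k (K : 'M[R]_k) (x : 'cV[R]_k) :
  cdot x (K *m x) = \sum_(p : 'I_k * 'I_k) x p.1 0 * x p.2 0 * K p.1 p.2.
Proof.
rewrite cdot_sumE -(pair_bigA _ (fun i j => x i 0 * x j 0 * K i j)) /=.
by apply: eq_bigr => i _; rewrite mxE mulr_sumr; apply: eq_bigr => j _; ring.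
Qed.

End ColumnDot.

Section HermitianSpectrum.
Variable C : numClosedFieldType.
Local Open Scope sesquilinear_scope.

Lemma eigenvalue_spectral_diag n (W : 'M[C]_n) i :
  W \is normalmx -> eigenvalue W (spectral_diag W 0 i).
Proof.
move=> Wn; set P := spectralmx W.
have PPt : P *m P^t* = 1%:M by apply/unitarymxP/spectral_unitarymx.
have PW : P *m W = diag_mx (spectral_diag W) *m P.
  rewrite {1}(orthomx_spectralP Wn) invmx_unitary ?spectral_unitarymx //.
  by rewrite !mulmxA PPt mul1mx.
apply/eigenvalueP; exists (row i P).
  by rewrite -row_mul PW row_mul row_diag_mx -scalemxAl -rowE.
apply/eqP => row0; have : row i (P *m P^t* ) = 0 by rewrite row_mul row0 mul0mx.
by rewrite PPt => /rowP/(_ i); rewrite !mxE eqxx => /eqP; rewrite oner_eq0.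
Qed.

Lemma hermitian_range_quad_ge n (W : 'M[C]_n) l (u : 'cV[C]_n) :
  W \is hermsymmx ->
  (forall mu, eigenvalue W mu -> mu \is Num.real -> mu != 0 -> l <= mu) ->
  l * ((W *m u)^t* *m (W *m u)) 0 0 <= ((W *m u)^t* *m W *m (W *m u)) 0 0.
Proof.
move=> Wh l_min; set P := spectralmx W; set D := spectral_diag W.
have Pu : P \is unitarymx by apply: spectral_unitarymx.
have PPt : P *m P^t* = 1%:M by apply/unitarymxP.
have PtP : P^t* *m P = 1%:M by apply: mulmx1C.
have WE : W = P^t* *m diag_mx D *m P.
  by rewrite -invmx_unitary //; apply/orthomx_spectralP/hermitian_normalmx.
set v := P *m (W *m u).
have vE : v = diag_mx D *m (P *m u) by rewrite /v {1}WE !mulmxA PPt mul1mx.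
have vtE : v^t* = (W *m u)^t* *m P^t* by rewrite /v trmx_mul map_mxM.
have -> : (W *m u)^t* *m (W *m u) = v^t* *m v.
  by rewrite vtE /v -mulmxA (mulmxA (P^t*)) PtP mul1mx.
have -> : (W *m u)^t* *m W *m (W *m u) = v^t* *m diag_mx D *m v.
  by rewrite vtE /v {2}WE !mulmxA.
(* [W *m u] lies in the range of [W], so its coordinates in the eigenbasis
   vanish wherever the eigenvalue does. *)
have vi i : v i 0 = D 0 i * (P *m u) i 0 by rewrite vE mul_diag_mx mxE.
clearbody v; rewrite mul_mx_diag !mxE mulr_sumr; apply: ler_sum => i _; rewrite !mxE.
have [Di0|Din0] := eqVneq (D 0 i) 0; first by rewrite vi Di0 !(mul0r, mulr0).
have lDi : l <= D 0 i.
  apply: l_min Din0; first exact/eigenvalue_spectral_diag/hermitian_normalmx.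
  exact: mxOverP (hermitian_spectral_diag_real Wh) 0 i.
rewrite [_ * D 0 i]mulrC -mulrA; apply: ler_wpM2r lDi.
by rewrite mulrC mul_conjC_ge0.
Qed.

End HermitianSpectrum.

Section RealSymmetricSpectrum.
Variable R : realType.
Local Notation rc := (real_complex R).
Local Open Scope sesquilinear_scope.

Lemma eigenvalue_map_real_complex n (W : 'M[R]_n) k :
  eigenvalue (map_mx rc W) (rc k) -> eigenvalue W k.
Proof. by rewrite !eigenvalue_root_char -map_char_poly fmorph_root. Qed.

Lemma lambda_min_plus_range_le n (W : 'M[R]_n) lam (u : 'cV[R]_n) :
  W^T = W -> is_lambda_min_plus W lam ->
  lam * cdot (W *m u) (W *m u) <= cdot (W *m u) (W *m (W *m u)).
Proof.
move=> Wsym [_ _ lam_min]; set WC := map_mx rc W.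
have rcE p q (X : 'M[R]_(p, q)) : (map_mx rc X)^t* = map_mx rc X^T.
  apply/matrixP => i j; rewrite !mxE conj_Creal //.
  by apply/complex_realP; eexists.
have WCh : WC \is hermsymmx.
  apply: realsym_hermsym.
    apply/is_hermitianmxP; rewrite expr0 scale1r; apply/matrixP=> i j; rewrite !mxE.
    by have := congr1 (fun M : 'M[R]_n => M j i) Wsym; rewrite mxE => ->.
  by apply/mxOverP => i j; rewrite mxE; apply/complex_realP; eexists.
have lamC mu : eigenvalue WC mu -> mu \is Num.real -> mu != 0 -> rc lam <= mu.
  move=> eig /complex_realP [k mu_k] mu0; rewrite mu_k lecR.
  apply: lam_min; first by apply: eigenvalue_map_real_complex; rewrite -mu_k.
  by apply: contraNneq mu0 => k0; rewrite mu_k k0 raddf0.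
have rc00 (X : 'M[R]_1) : map_mx rc X 0 0 = rc (X 0 0) by rewrite mxE.
have := hermitian_range_quad_ge (map_mx rc u) WCh lamC.
by rewrite -!map_mxM rcE -!map_mxM !rc00 -rmorphM lecR /cdot !mulmxA.
Qed.

End RealSymmetricSpectrum.

Section PseudoInverse.
Variable R : realType.

Lemma penrose_uniq p q (K : 'M[R]_(p, q)) X Y :
  penrose K X -> penrose K Y -> X = Y.
Proof.
case=> X1 X2 X3 X4 [Y1 Y2 Y3 Y4].
have eX : X = X *m K *m Y.
  have KXt : (K *m X)^T = (K *m X)^T *m (K *m Y)^T.
    by rewrite -trmx_mul !mulmxA Y1.
  by rewrite -{1}X2 -mulmxA -X3 KXt X3 Y3 !mulmxA X2.
have eY : Y = X *m K *m Y.
  have YKt : (Y *m K)^T = (X *m K)^T *m (Y *m K)^T.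
    by rewrite -trmx_mul -!mulmxA [K *m (X *m K)]mulmxA X1.
  by rewrite -{1}Y2 -Y4 YKt X4 Y4 -[_ *m (Y *m K) *m Y]mulmxA Y2.
by rewrite {1}eX -eY.
Qed.

(* If [K] had no Penrose inverse, [mpinv K] would be the default [0], which
   satisfies both identities as well. *)
Lemma mpinv_sym p (K : 'M[R]_p) : K^T = K ->
  (mpinv K)^T = mpinv K /\ mpinv K *m K *m mpinv K = mpinv K.
Proof.
move=> Ksym; rewrite /mpinv; case: xgetP => [X _ /= [X1 X2 X3 X4]|_]; last first.
  by rewrite !mul0mx trmx0.
split => //; apply: (@penrose_uniq _ _ K); last by split.
split.
- by have := congr1 trmx X1; rewrite !trmx_mul Ksym mulmxA.
- by have := congr1 trmx X2; rewrite !trmx_mul Ksym mulmxA.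
- by rewrite trmx_mul trmxK Ksym -X4 trmx_mul Ksym.
- by rewrite trmx_mul trmxK Ksym -X3 trmx_mul Ksym.
Qed.

End PseudoInverse.

Section PositiveDefinite.
Variables (R : realType) (n : nat) (B : 'M[R]_n).
Hypothesis Bspd : spd B.

Lemma spd_quad_gt0 x : x != 0 -> 0 < cdot x (B *m x).
Proof. by case: Bspd => _ Bpos /Bpos; rewrite /cdot mulmxA. Qed.

Lemma spd_unitmx : B \in unitmx.
Proof.
apply: contraT; rewrite unitmxE unitfE negbK => /det0P [v v0 vB].
have := @spd_quad_gt0 v^T; rewrite /cdot trmxK mulmxA vB mul0mx mxE ltxx; apply.
by apply: contra v0 => /eqP /(congr1 trmx); rewrite trmxK trmx0 => ->.
Qed.

Lemma spd_invmx_sym : (invmx B)^T = invmx B.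
Proof. by rewrite trmx_inv; case: Bspd => ->. Qed.

Lemma spd_invmx_quadE a :
  cdot a (invmx B *m a) = cdot (invmx B *m a) (B *m (invmx B *m a)).
Proof. by rewrite mulmxA mulmxV ?spd_unitmx // mul1mx cdotC. Qed.

Lemma spd_invmx_quad_gt0 a : a != 0 -> 0 < cdot a (invmx B *m a).
Proof.
move=> a0; rewrite spd_invmx_quadE spd_quad_gt0 //.
by apply: contra a0 => /eqP Ba0; rewrite -[a](mulKVmx spd_unitmx) Ba0 mulmx0.
Qed.

Lemma spd_invmx_quad_ge0 a : 0 <= cdot a (invmx B *m a).
Proof.
by have [->|/spd_invmx_quad_gt0/ltW //] := eqVneq a 0; rewrite mulmx0 cdot0l.
Qed.

(* With [X] the symmetric square root of [invmx B] and [z := X *m (E *m w)],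
   the two forms are [cdot z z] and [cdot z (X *m E *m X *m z)], and [z] lies
   in the range of [X *m E *m X].  Were there no square root, [mxsqrt] would
   default to [0], which has no nonzero eigenvalue. *)
Lemma mxsqrt_lambda_min_plus_le (E : 'M[R]_n) lam w :
  E^T = E -> is_lambda_min_plus (mxsqrt (invmx B) *m E *m mxsqrt (invmx B)) lam ->
  let x := invmx B *m (E *m w) in lam * cdot x (B *m x) <= cdot x (E *m x).
Proof.
move=> Esym; rewrite /mxsqrt; case: xgetP => [X _ [[Xsym _] XX]|_]; last first.
  case=> /eigenvalueP [v]; rewrite !mulmx0 => /esym/eqP.
  by rewrite scalemx_eq0 => /orP [] /eqP ->; rewrite eqxx.
move=> lam_min; set x := invmx B *m (E *m w).
have Xu : X \in unitmx.
  by have := unitmx_inv B; rewrite spd_unitmx -XX unitmx_mul => /andP[].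
have Wsym : (X *m E *m X)^T = X *m E *m X by rewrite !trmx_mul Esym Xsym mulmxA.
have := lambda_min_plus_range_le (invmx X *m w) Wsym lam_min.
have -> : X *m E *m X *m (invmx X *m w) = X *m (E *m w).
  by rewrite -mulmxA mulKVmx // mulmxA.
have xE : x = X *m (X *m (E *m w)) by rewrite /x -XX mulmxA.
set z := X *m (E *m w) in xE *; clearbody z.
have XBX : X *m B *m X = 1%:M.
  suff -> : X *m B = invmx X by rewrite mulVmx.
  rewrite -[X *m B]mul1mx -(mulVmx Xu) -mulmxA (mulmxA X X) XX.
  by rewrite mulVmx ?spd_unitmx // mulmx1.
by rewrite xE !cdot_mulmxl Xsym !mulmxA XBX mul1mx.
Qed.

End PositiveDefinite.

Lemma trmx_sub_range (F : fieldType) m n (A : 'M[F]_(m, n)) (E : 'M[F]_n) :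
  E^T = E -> (forall v : 'cV[F]_n, E *m v = 0 <-> A *m v = 0) ->
  forall e : 'cV[F]_m, exists w, A^T *m e = E *m w.
Proof.
move=> Esym kerE e.
have AE : (A <= E)%MS.
  rewrite submxE; apply/eqP/matrixP => i j; rewrite [RHS]mxE.
  have : E *m col j (cokermx E) = 0 by rewrite colE mulmxA mulmx_coker mul0mx.
  by move/kerE/matrixP/(_ i 0); rewrite colE mulmxA -colE !mxE.
have /submxP [w Ew] : (e^T *m A <= E)%MS := submx_trans (submxMl _ _) AE.
by exists w^T; rewrite -[A^T *m e]trmxK trmx_mul trmxK Ew trmx_mul Esym.
Qed.

Section DualAscent.
Variables (R : realType) (m n : nat) (A : 'M[R]_(m, n)) (B : 'M[R]_n)
  (b : 'cV[R]_m) (x0 : 'cV[R]_n).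
Hypothesis Bspd : spd B.
Local Notation M := (A *m invmx B *m A^T).
Local Notation c := (b - A *m x0).
Local Notation D := (dualD A B b x0).

Lemma dualM_sym : M^T = M.
Proof. by rewrite !trmx_mul trmxK spd_invmx_sym // mulmxA. Qed.

Lemma dualM_quadE e : cdot e (M *m e) = cdot (A^T *m e) (invmx B *m (A^T *m e)).
Proof. by rewrite -!mulmxA cdot_mulmxr. Qed.

Lemma dualDE y : D y = cdot c y - 2^-1 * cdot y (M *m y).
Proof. by rewrite /dualD /cdot trmx_mul trmxK !mulmxA. Qed.

Lemma dualD_shift y e :
  D (y + e) = D y + cdot (c - M *m y) e - 2^-1 * cdot e (M *m e).
Proof.
rewrite !dualDE; move: (b - A *m x0) => r.
rewrite mulmxDr cdotBl !cdotDr !cdotDl.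
rewrite [cdot y (M *m e)]cdot_mulmxr dualM_sym [cdot e (M *m y)]cdotC.
by field.
Qed.

(* Along [ys + u *: r], with [r] the residual [c - M *m ys], [D] grows by
   [u * cdot r r - u ^+ 2 / 2 * cdot r (M *m r)], which is positive for
   [u := cdot r r / (cdot r (M *m r) + 1)] unless [r = 0]. *)
Lemma dual_argmax_stationary ys : (forall y, D y <= D ys) -> M *m ys = c.
Proof.
move=> ys_max; apply/eqP; rewrite eq_sym -subr_eq0 -cdot_self_eq0.
set r := c - M *m ys; set s := cdot r r; set q := cdot r (M *m r).
have q0 : 0 <= q by rewrite /q dualM_quadE spd_invmx_quad_ge0.
have s0 : 0 <= s by apply: cdot_self_ge0.
set u := s / (q + 1).
have su : s = u * (q + 1) by rewrite /u divfK // lt0r_neq0 // ltr_wpDl.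
have u0 : 0 <= u by rewrite /u divr_ge0 // addr_ge0.
have := ys_max (ys + u *: r).
rewrite dualD_shift -/r -scalemxAr cdotZl !cdotZr -/s -/q => le_D.
have u2 : u ^+ 2 <= 0 by nra.
have u_eq0 : u = 0 by apply/eqP; rewrite -sqrf_eq0 eq_le u2 sqr_ge0.
by rewrite su u_eq0 mul0r.
Qed.

Variable ystar : 'cV[R]_m.
Hypothesis Mystar : M *m ystar = c.

Lemma dual_gapE y : D ystar - D y = 2^-1 * cdot (y - ystar) (M *m (y - ystar)).
Proof.
have -> : D y = D (ystar + (y - ystar)) by rewrite addrC subrK.
by rewrite dualD_shift Mystar subrr cdot0l; field.
Qed.

Lemma Hmat_sym_idem q (Sm : 'M[R]_(m, q)) :
  (Hmat A B Sm)^T = Hmat A B Sm /\ Hmat A B Sm *m M *m Hmat A B Sm = Hmat A B Sm.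
Proof.
set K := Sm^T *m A *m invmx B *m A^T *m Sm.
have Ksym : K^T = K by rewrite /K !trmx_mul !trmxK spd_invmx_sym // !mulmxA.
have [Psym PKP] := mpinv_sym Ksym.
rewrite /Hmat -/K; split; first by rewrite !trmx_mul trmxK Psym mulmxA.
by rewrite -[in RHS]PKP /K !mulmxA.
Qed.

Lemma sdsa_stepE q (Sm : 'M[R]_(m, q)) omega y :
  sdsa_step A B b x0 omega Sm y =
  y - omega *: (Hmat A B Sm *m (M *m (y - ystar))).
Proof.
rewrite /sdsa_step /Hmat.
have -> : b - A *m (x0 + invmx B *m A^T *m y) = - (M *m (y - ystar)).
  by rewrite mulmxBr Mystar opprB mulmxDr opprD addrA !mulmxA.
by rewrite !mulmxN scalerN !mulmxA.
Qed.

(* Since [H *m M *m H = H], the squared [M]-norm of the increment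
   [omega *: (H *m (M *m e))] is [omega ^+ 2] times its inner product with
   [M *m e]; this produces the factor [omega * (2 - omega)]. *)
Lemma dual_gap_step q (Sm : 'M[R]_(m, q)) omega y :
  let e := y - ystar in
  D ystar - D (sdsa_step A B b x0 omega Sm y) =
  D ystar - D y - omega * (2 - omega) / 2 *
    cdot (invmx B *m A^T *m e) ((A^T *m Hmat A B Sm *m A) *m (invmx B *m A^T *m e)).
Proof.
move=> e; have [Hsym HMH] := Hmat_sym_idem Sm; set H := Hmat A B Sm in Hsym HMH *.
have -> : cdot (invmx B *m A^T *m e) (A^T *m H *m A *m (invmx B *m A^T *m e))
    = cdot (M *m e) (H *m (M *m e)).
  by rewrite -!mulmxA cdot_mulmxr trmxK !mulmxA.
rewrite !dual_gapE sdsa_stepE -/H addrAC -/e; clearbody H e.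
set h := H *m (M *m e).
rewrite mulmxBr -scalemxAr !cdotBl !cdotBr !cdotZl !cdotZr.
have -> : cdot e (M *m h) = cdot (M *m e) h by rewrite cdot_mulmxr dualM_sym.
have -> : cdot h (M *m e) = cdot (M *m e) h by rewrite cdotC.
have -> : cdot h (M *m h) = cdot (M *m e) h.
  by rewrite /h cdot_mulmxl Hsym -[in RHS]HMH !mulmxA.
by field.
Qed.

Lemma dual_gap_pos : A != 0 -> exists y, 0 < D ystar - D y.
Proof.
move=> A0; have /existsP [[i j] /= Aij] : [exists p : 'I_m * 'I_n, A p.1 p.2 != 0].
  apply: contraNT A0 => /existsPn Aeq0; apply/eqP/matrixP => i j.
  by have := Aeq0 (i, j); rewrite negbK mxE => /eqP.
exists (ystar + delta_mx i 0); rewrite dual_gapE addrAC subrr add0r.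
rewrite dualM_quadE mulr_gt0 ?invr_gt0 ?ltr0n // spd_invmx_quad_gt0 //.
by apply/eqP => /matrixP/(_ j 0); rewrite -colE !mxE => /eqP; apply/negP.
Qed.

End DualAscent.

Local Open Scope classical_set_scope.

Section Expectation.
Variables (d : measure_display) (T : measurableType d) (R : realType).

(* No measurability is needed: a nonnegative integral is the supremum of the
   integrals of the simple functions below the integrand. *)
Lemma ge0_le_integralT (mu : {measure set T -> \bar R}) (f g : T -> \bar R) :
  (forall t, 0 <= f t)%E -> (forall t, f t <= g t)%E ->
  (\int[mu]_t f t <= \int[mu]_t g t)%E.
Proof.
move=> f0 fg; have g0 t : (0 <= g t)%E := le_trans (f0 t) (fg t).
rewrite !ge0_integralTE //; apply: ereal_sup_le => _ [h hf <-].
by exists h => //= t; exact: le_trans (hf t) (fg t).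
Qed.

Variable mu : probability T R.

Definition mx_expect p q (Z : T -> 'M[R]_(p, q)) : 'M[R]_(p, q) :=
  \matrix_(i, j) fine (\int[mu]_t (Z t i j)%:E)%E.

Lemma mx_expect_sym p (Z : T -> 'M[R]_p) :
  (forall t, (Z t)^T = Z t) -> (mx_expect Z)^T = mx_expect Z.
Proof.
move=> Zsym; apply/matrixP => i j; rewrite !mxE; congr fine.
by apply: eq_integral => t _; rewrite -[in LHS]Zsym mxE.
Qed.

Lemma integral_affine_sum (I : finType) (a : R) (c : I -> R) (f : I -> T -> R) :
  (forall i, mu.-integrable setT (fun t => (f i t)%:E)) ->
  mu.-integrable setT (fun t => (a + \sum_i c i * f i t)%:E) /\
  (\int[mu]_t (a + \sum_i c i * f i t)%:E =
     (a + \sum_i c i * fine (\int[mu]_t (f i t)%:E))%:E)%E.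
Proof.
move=> f_int; have cf_int i : mu.-integrable setT (fun t => ((c i)%:E * (f i t)%:E)%E).
  exact: integrableZl.
have a_int : mu.-integrable setT (fun=> a%:E) by exact: finite_measure_integrable_cst.
have -> : (fun t => (a + \sum_i c i * f i t)%:E) =
          (fun t => a%:E + \sum_i ((c i)%:E * (f i t)%:E))%E.
  by apply: funext => t; rewrite EFinD -sumEFin.
split; first by apply: integrableD => //; apply: integrable_sum.
rewrite integralD //; last by apply: integrable_sum.
rewrite integral_cst // [X in (_ * X)%E]probability_setT mule1 integral_sum //.
rewrite EFinD -sumEFin; congr (_ + _)%E; apply: eq_bigr => i _.
by rewrite integralZl // EFinM fineK //; apply: integrable_fin_num.
Qed.

Lemma integral_affine_quad n (Z : T -> 'M[R]_n) (a k : R) (x : 'cV[R]_n) :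
  (forall i j, mu.-integrable setT (fun t => (Z t i j)%:E)) ->
  mu.-integrable setT (fun t => (a + k * cdot x (Z t *m x))%:E) /\
  (\int[mu]_t (a + k * cdot x (Z t *m x))%:E =
     (a + k * cdot x (mx_expect Z *m x))%:E)%E.
Proof.
move=> Z_int; have ->: (fun t => (a + k * cdot x (Z t *m x))%:E) =
    (fun t => (a + \sum_(p : 'I_n * 'I_n) k * (x p.1 0 * x p.2 0) * Z t p.1 p.2)%:E).
  apply: funext => t; rewrite cdot_quad_sum mulr_sumr.
  by rewrite (eq_bigr _ (fun p _ => mulrA _ _ _)).
have [-> ->] := integral_affine_sum a (fun p => k * (x p.1 0 * x p.2 0))
  (f := fun p t => Z t p.1 p.2) (fun p => Z_int p.1 p.2).
rewrite cdot_quad_sum mulr_sumr; split => //.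
by under [in RHS]eq_bigr do rewrite mxE mulrA.
Qed.

Lemma iid_expect_ge0 k (f : seq T -> \bar R) :
  (forall s, 0 <= f s)%E -> (0 <= iid_expect mu k f)%E.
Proof. by elim: k f => [|k IH] f f0 //=; apply: integral_ge0 => t _; apply: IH. Qed.

(* The contraction factor [rho] need not be assumed nonnegative: it bounds the
   expectation of a nonnegative quantity at a point where that quantity is
   positive. *)
Lemma iid_expect_contraction (X : Type) (step : T -> X -> X) (f : X -> R) (rho : R) :
  (forall x, 0 <= f x) -> (exists x, 0 < f x) ->
  (forall x, mu.-integrable setT (fun t => (f (step t x))%:E)) ->
  (forall x, \int[mu]_t (f (step t x))%:E <= (rho * f x)%:E)%E ->
  forall k x, (iid_expect mu k (fun s => (f (foldl (fun y t => step t y) x s))%:E)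
               <= (rho ^+ k * f x)%:E)%E.
Proof.
move=> f0 [x1 fx1] f_int f_step.
have rho0 : 0 <= rho.
  rewrite -(pmulr_lge0 _ fx1) -lee_fin; apply: le_trans (f_step x1).
  by apply: integral_ge0 => t _; rewrite lee_fin.
elim=> [|k IH] x /=; first by rewrite expr0 mul1r.
apply: le_trans (ge0_le_integralT _ _ (fun t => IH (step t x))) _.
  by move=> t; apply: iid_expect_ge0 => s; rewrite lee_fin.
under eq_integral do rewrite EFinM.
by rewrite integralZl // exprSr -mulrA EFinM lee_wpmul2l ?lee_fin ?exprn_ge0.
Qed.

End Expectation.

Section ExpectedDualGap.
Variables (R : realType) (m n : nat) (A : 'M[R]_(m, n)) (B : 'M[R]_n)
  (b : 'cV[R]_m) (x0 : 'cV[R]_n).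
Variables (d : measure_display) (T : measurableType d) (mu : probability T R)
  (S : T -> {q : nat & 'M[R]_(m, q)}) (omega lam : R) (ystar : 'cV[R]_m).
Local Notation Z t := (A^T *m Hmat A B (projT2 (S t)) *m A).
Local Notation EZ := (mx_expect mu (fun t => Z t)).
Local Notation gap y := (dualD A B b x0 ystar - dualD A B b x0 y).
Local Notation step t y := (sdsa_step A B b x0 omega (projT2 (S t)) y).

Hypotheses (Bspd : spd B) (Mystar : A *m invmx B *m A^T *m ystar = b - A *m x0).
Hypothesis Z_int : forall i j, mu.-integrable setT (fun t => (Z t i j)%:E).
Hypothesis kerEZ : forall x : 'cV[R]_n, EZ *m x = 0 <-> A *m x = 0.
Hypothesis omega_range : 0 < omega < 2.
Hypothesis lam_min :
  is_lambda_min_plus (mxsqrt (invmx B) *m EZ *m mxsqrt (invmx B)) lam.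

Lemma expected_dual_gap_step y :
  mu.-integrable setT (fun t => (gap (step t y))%:E) /\
  (\int[mu]_t (gap (step t y))%:E <= ((1 - omega * (2 - omega) * lam) * gap y)%:E)%E.
Proof.
set x := invmx B *m A^T *m (y - ystar); set kap := omega * (2 - omega) / 2.
have gap_step t : gap (step t y) = gap y + (- kap) * cdot x (Z t *m x).
  by rewrite dual_gap_step // mulNr.
have gapE : gap y = 2^-1 * cdot x (B *m x).
  by rewrite dual_gapE // dualM_quadE spd_invmx_quadE // !mulmxA.
have EZsym : EZ^T = EZ.
  apply: mx_expect_sym => t; have [Hsym _] := Hmat_sym_idem A Bspd (projT2 (S t)).
  by move: (Hmat _ _ _) Hsym => H Hsym; rewrite !trmx_mul trmxK Hsym mulmxA.
have [w xE] : exists w, x = invmx B *m (EZ *m w).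
  have [w Aw] := trmx_sub_range EZsym kerEZ (y - ystar).
  by exists w; rewrite /x -mulmxA Aw.
have := mxsqrt_lambda_min_plus_le Bspd w EZsym lam_min; rewrite /= -xE => EZ_ge.
have [int_gap int_gapE] := integral_affine_quad (gap y) (- kap) x Z_int.
have -> : (fun t => (gap (step t y))%:E) =
    (fun t => (gap y + - kap * cdot x (Z t *m x))%:E).
  by apply: funext => t; rewrite gap_step.
split => //; rewrite int_gapE lee_fin gapE.
have kap0 : 0 <= kap by case/andP: omega_range => ? ?; rewrite /kap; nra.
have := ler_wpM2l kap0 EZ_ge; rewrite /kap; nra.
Qed.

End ExpectedDualGap.

Theorem mainTheorem8 (R : realType) (m n : nat)
  (A : 'M[R]_(m, n)) (b : 'cV[R]_m) (B : 'M[R]_n) (x0 : 'cV[R]_n)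
  (d : measure_display) (T : measurableType d) (mu : probability T R)
  (S : T -> {q : nat & 'M[R]_(m, q)})
  (omega lam : R) (ystar : 'cV[R]_m) :
  (exists x : 'cV[R]_n, A *m x = b) ->
  spd B ->
  (* measurability / integrability of the random matrices H and Z *)
  (forall i j, measurable_fun setT
     (fun t => Hmat A B (projT2 (S t)) i j)) ->
  (forall i j, mu.-integrable setT
     (fun t => ((A^T *m Hmat A B (projT2 (S t)) *m A) i j)%:E)) ->
  let EZ : 'M[R]_n := \matrix_(i, j)
     fine (\int[mu]_t ((A^T *m Hmat A B (projT2 (S t)) *m A) i j)%:E)%E in
  (* exactness *)
  (forall x : 'cV[R]_n, EZ *m x = 0 <-> A *m x = 0) ->
  A != 0 ->
  is_lambda_min_plus (mxsqrt (invmx B) *m EZ *m mxsqrt (invmx B)) lam ->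
  0 < omega < 2 ->
  (forall y, dualD A B b x0 y <= dualD A B b x0 ystar) ->
  forall k : nat,
    (iid_expect mu k (fun s =>
       (dualD A B b x0 ystar - dualD A B b x0 (sdsa_iter A B b x0 omega S 0 s))%:E)
     <= ((1 - omega * (2 - omega) * lam) ^+ k
         * (dualD A B b x0 ystar - dualD A B b x0 0))%:E)%E.
Proof.
move=> _ Bspd _ Z_int EZ kerEZ A0 lam_min omega_range ystar_max k.
have Mystar := dual_argmax_stationary Bspd ystar_max.
have [y1 gap_y1] := dual_gap_pos Bspd Mystar A0.
have gap_step := expected_dual_gap_step Bspd Mystar Z_int kerEZ omega_range lam_min.
apply: (iid_expect_contraction
  (step := fun t y => sdsa_step A B b x0 omega (projT2 (S t)) y)
  (f := fun y => dualD A B b x0 ystar - dualD A B b x0 y) _ _ _ _ k 0).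
- by move=> y; rewrite subr_ge0.
- by exists y1.
- exact: (fun y => (gap_step y).1).
- exact: (fun y => (gap_step y).2).
Qed.
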